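(* Let $\succ=(\succ_s)_{s\in S}$ be a priority profile such that every $\succ_s$ is a partial order on $I$. Suppose $K\ge 1$ and $\mu_1,\dots,\mu_K$ are stable matchings for $\succ$ such that $\mu_{k'}$ Pareto dominates $\mu_k$ for all $1\le k<k'\le K$. Then there exists an extension profile $\succ^*\in\mathcal{E}(\succ)$ such that every one of $\mu_1,\dots,\mu_K$ is stable for $\succ^*$.
   Context: All binary relations $B$ considered are asymmetric: $(x,y)\in B$ implies $(y,x)\notin B$. A binary relation $B$ on $X$ is complete if $x\neq y$ implies $(x,y)\in B$ or $(y,x)\in B$; negatively transitive if $(x,y)\notin B$ and $(y,z)\notin B$ imply $(x,z)\notin B$; transitive if $(x,y),(y,z)\in B$ imply $(x,z)\in B$; acyclic if for all $K\ge2$ and $x_0,\dots,x_K\in X$, [$(x_{k-1},x_k)\in B$ and $(x_k,x_{k-1})\notin B$ for all $k=1,\dots,K$] implies $(x_K,x_0)\notin B$. A partial order is an asymmetric transitive relation; a weak order is a negatively transitive partial order; a total order is a complete weak order. $\mathcal{A},\mathcal{P},\mathcal{W},\mathcal{T}$ denote the sets of acyclic, partial order, weak order, total order (asymmetric) relations on $I$. School choice setup: $I$ is a finite set of students with $|I|\ge 3$, $S$ a finite set of schools. Each student $i$ has a total order $P_i$ on $S\cup\{\emptyset\}$ ($\emptyset$ = outside option); $sR_is'$ means $sP_is'$ or $s=s'$. Each school $s$ has capacity $q_s\in\mathbb{Z}_{++}$ and a priority relation $\succ_s$, an asymmetric binary relation on $I$ ($(i,j)\in\succ_s$: $i$ has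 higher priority than $j$ at $s$). A matching $\mu$ assigns each $i$ to $\mu(i)\in S\cup\{\emptyset\}$, with $\mu(s)=\{i:\mu(i)=s\}$. $\mu$ is individually rational if $\mu(i)R_i\emptyset$ for all $i$; non-wasteful if $sP_i\mu(i)$ implies $|\mu(s)|=q_s$; fair for $\succ$ if there are no $s$, $j\in\mu(s)$, $i\notin\mu(s)$ with $sR_i\mu(i)$ and $(i,j)\in\succ_s$; stable for $\succ$ if individually rational, non-wasteful and fair for $\succ$ (capacities $|\mu(s)|\le q_s$ are required of matchings). $\mu$ is Pareto dominated by $\mu'$ if $\mu'(i)R_i\mu(i)$ for all $i$ and $\mu'(i)P_i\mu(i)$ for some $i$. An extension of $\succ_s$ is a total order $\hat\succ_s$ on $I$ with $\succ_s\subseteq\hat\succ_s$; $E(\succ_s)$ is the set of extensions of $\succ_s$ and $\mathcal{E}(\succ)$ the set of profiles $(\succ'_s)_{s\in S}$ with $\succ'_s\in E(\succ_s)$ for all $s$. *)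

From mathcomp Require Import all_boot.
Set Implicit Arguments. Unset Strict Implicit. Unset Printing Implicit Defensive.

Section Relations.
Variable T : Type.
Definition asymmetric (r : rel T) : Prop := forall x y, r x y -> ~~ r y x.
Definition rtransitive (r : rel T) : Prop :=
  forall x y z, r x y -> r y z -> r x z.
Definition neg_transitive (r : rel T) : Prop :=
  forall x y z, ~~ r x y -> ~~ r y z -> ~~ r x z.
End Relations.

Definition rcomplete (T : eqType) (r : rel T) : Prop :=
  forall x y, x != y -> r x y || r y x.

Definition partial_order (T : Type) (r : rel T) : Prop :=
  asymmetric r /\ rtransitive r.
Definition weak_order (T : Type) (r : rel T) : Prop :=
  partial_order r /\ neg_transitive r.
Definition total_order (T : eqType) (r : rel T) : Prop :=
  weak_order r /\ rcomplete r.

Section SchoolChoice.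
(* students I, schools S; None = outside option (emptyset) *)
Variables (I S : finType).
Variable (P : I -> rel (option S)).   (* P i a b : a P_i b (strict preference) *)
Variable (q : S -> nat).

Definition R (i : I) (a b : option S) : bool := P i a b || (a == b).

Definition assigned (mu : I -> option S) (s : S) : {set I} :=
  [set i | mu i == Some s].

Definition is_matching (mu : I -> option S) : Prop :=
  forall s, #|assigned mu s| <= q s.

Definition individually_rational (mu : I -> option S) : Prop :=
  forall i, R i (mu i) None.

Definition non_wasteful (mu : I -> option S) : Prop :=
  forall i s, P i (Some s) (mu i) -> #|assigned mu s| = q s.

Definition fair (pr : S -> rel I) (mu : I -> option S) : Prop :=
  ~ exists s j i, [/\ mu j = Some s, mu i <> Some s,
                      R i (Some s) (mu i) & pr s i j].

Definition stable (pr : S -> rel I) (mu : I -> option S) : Prop :=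
  [/\ is_matching mu, individually_rational mu, non_wasteful mu & fair pr mu].

Definition pareto_dominates (mu' mu : I -> option S) : Prop :=
  (forall i, R i (mu' i) (mu i)) /\ exists i, P i (mu' i) (mu i).

Definition extension_profile (pr pr' : S -> rel I) : Prop :=
  forall s, total_order (pr' s) /\ (forall i j, pr s i j -> pr' s i j).
End SchoolChoice.

From mathcomp Require Import all_boot order zify.

Set Implicit Arguments.
Unset Strict Implicit.
Unset Printing Implicit Defensive.

Import Order.TTheory.

(* Fix a school s.  For a student x let first_reach s x be the
   first index k of the chain at which x, or some student with lower
   priority than x at s, is assigned to s.  Ranking the students at s
   lexicographically by
     (first_reach s x, number of students with priority over x, x itself)
   gives a total order extending the partial order pr s: higher priority
   means weakly smaller first_reach and strictly fewer students above.
   Fairness survives: if i envies j's seat at s under mu_k, then by the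
   Pareto improvements i also envies s under every earlier mu_k', so by
   fairness of mu_k' nobody at or below i sits at s there; hence
   k < first_reach s i while first_reach s j <= k, and j ranks above i. *)

(* Lexicographic pairing of naturals whose second component is below M. *)
Definition lex_pair (M a b : nat) : nat := a * M + b.

Lemma lex_pair_lt M a b a' b' : b < M -> b' < M ->
  (a < a') || ((a == a') && (b < b')) -> lex_pair M a b < lex_pair M a' b'.
Proof. by rewrite /lex_pair => hb hb' /orP[h|/andP[/eqP -> h]]; nia. Qed.

Lemma lex_pair_eq_snd M a b a' b' : b < M -> b' < M ->
  lex_pair M a b = lex_pair M a' b' -> b = b'.
Proof.
move=> hb hb' E; case: (ltngtP a a') => [lt_aa'|lt_a'a|eq_aa'].
- by have := @lex_pair_lt M a b a' b' hb hb'; rewrite lt_aa' E ltnn => /(_ isT).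
- by have := @lex_pair_lt M a' b' a b hb' hb; rewrite lt_a'a E ltnn => /(_ isT).
- by move: E; rewrite /lex_pair eq_aa'; lia.
Qed.

Lemma key_total_order (T : eqType) (f : T -> nat) :
  injective f -> total_order (fun x y => f x < f y).
Proof.
move=> f_inj; split; first split; first split.
- by move=> x y /= lt_xy; rewrite -leqNgt ltnW.
- by move=> x y z /=; apply: ltn_trans.
- by move=> x y z /=; rewrite -!leqNgt => le_yx le_zy; apply: leq_trans le_zy le_yx.
- move=> x y /= neq_xy; case: (ltngtP (f x) (f y)) => // /f_inj eq_xy.
  by rewrite eq_xy eqxx in neq_xy.
Qed.

Lemma asym_irrefl (T : Type) (r : rel T) : asymmetric r -> forall x, ~~ r x x.
Proof. by move=> r_asym x; apply/negP => rxx; have := r_asym _ _ rxx; rewrite rxx. Qed.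

Definition above (T : finType) (r : rel T) (x : T) : {set T} := [set z | r z x].

Section UpperSets.
Variables (T : finType) (r : rel T).
Hypothesis r_po : partial_order r.

Lemma card_above_lt x y : r x y -> #|above r x| < #|above r y|.
Proof.
move=> rxy; apply: proper_card; rewrite properE; apply/andP; split.
  by apply/subsetP => z; rewrite !inE => rzx; apply: r_po.2 rzx rxy.
apply/subsetP => /(_ x); rewrite !inE rxy (negbTE (asym_irrefl r_po.1 x)).
by move=> /(_ isT).
Qed.

(* No element is above itself, so an upper set is never the whole type;
   this bounds the middle component of the lexicographic key below. *)
Lemma card_above_bound x : #|above r x| < #|T|.
Proof.
rewrite -cardsT; apply: proper_card; rewrite properT; apply/eqP => E.
by have := in_setT x; rewrite -E inE (negbTE (asym_irrefl r_po.1 x)).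
Qed.

End UpperSets.

Section ExtendPriorities.
Variables (I S : finType) (P : I -> rel (option S)) (pr : S -> rel I).
Hypothesis P_po : forall i, partial_order (P i).
Hypothesis pr_po : forall s, partial_order (pr s).

Variables (K : nat) (mu : 'I_K -> I -> option S).
Hypothesis mu_fair : forall k, fair P pr (mu k).
Hypothesis mu_improving :
  forall k k' : 'I_K, k' < k -> forall i, R P i (mu k i) (mu k' i).

Lemma P_R_trans i a b c : P i a b -> R P i b c -> P i a c.
Proof. by move=> Pab /orP[Pbc | /eqP <-] //; apply: (P_po i).2 Pab Pbc. Qed.

Definition reaches (s : S) (x : I) (k : 'I_K) : bool :=
  [exists j, ((j == x) || pr s x j) && (mu k j == Some s)].

(* The first index of the chain at which x reaches s (K if never). *)
Definition first_reach (s : S) (x : I) : nat :=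
  \big[Order.min/K]_(k | reaches s x k) (k : nat).

Lemma first_reach_le s x k : reaches s x k -> first_reach s x <= k.
Proof. exact: (bigmin_le_cond _ (fun k : 'I_K => k : nat)). Qed.

(* Reaching s is inherited upwards in the priority order. *)
Lemma first_reach_mono s x y : pr s x y -> first_reach s x <= first_reach s y.
Proof.
move=> pr_xy; rewrite -leEnat; apply/bigmin_geP; split; first exact: bigmin_le_id.
move=> k /existsP[j /andP[/orP[/eqP -> | pr_yj] mu_j]]; apply: first_reach_le.
  by apply/existsP; exists y; rewrite pr_xy orbT mu_j.
by apply/existsP; exists j; rewrite ((pr_po s).2 _ _ _ pr_xy pr_yj) orbT mu_j.
Qed.

(* Core of the argument: a student envying s under mu k envied s all along,
   so by fairness nobody at or below him sat at s earlier in the chain. *)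
Lemma envy_blocks_reach s i (k k' : 'I_K) :
  mu k i <> Some s -> R P i (Some s) (mu k i) -> k' <= k -> ~~ reaches s i k'.
Proof.
move=> not_at_s envy le_k'k; have P_s : P i (Some s) (mu k i).
  by case/orP: envy => // /eqP E; rewrite E in not_at_s.
have P_s' : P i (Some s) (mu k' i).
  move: le_k'k; rewrite leq_eqVlt => /orP[/eqP E | lt_k'k].
    by have -> : k' = k by apply: val_inj.
  exact: P_R_trans P_s (mu_improving lt_k'k i).
have not_at_s' : mu k' i <> Some s.
  by move=> E; move: P_s'; rewrite E (negbTE (asym_irrefl (P_po i).1 _)).
apply/existsP => -[j /andP[/orP[/eqP -> | pr_ij] /eqP mu_j]] //.
by case: (@mu_fair k'); exists s, j, i; split => //; rewrite /R P_s'.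
Qed.

Lemma first_reach_after_envy s i (k : 'I_K) :
  mu k i <> Some s -> R P i (Some s) (mu k i) -> k < first_reach s i.
Proof.
move=> not_at_s envy; rewrite -leEnat; apply/bigmin_geP; split => // k' reach_k'.
rewrite leEnat ltnNge; apply/negP => le_k'k.
by have := envy_blocks_reach not_at_s envy le_k'k; rewrite reach_k'.
Qed.

Definition priority_key (s : S) (x : I) : nat :=
  lex_pair #|I| (lex_pair #|I| (first_reach s x) #|above (pr s) x|)
           (enum_rank x).

Definition pr_ext (s : S) : rel I :=
  fun x y => priority_key s x < priority_key s y.

Lemma priority_key_lt s x y :
  (first_reach s x < first_reach s y) ||
  ((first_reach s x == first_reach s y) &&
   (#|above (pr s) x| < #|above (pr s) y|)) ->
  priority_key s x < priority_key s y.
Proof.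
move=> lt_xy; apply: lex_pair_lt => //; apply/orP; left.
by apply: lex_pair_lt => //; apply: card_above_bound.
Qed.

(* The last component enum_rank x makes the key injective. *)
Lemma priority_key_inj s : injective (priority_key s).
Proof.
move=> x y /lex_pair_eq_snd E; apply: enum_rank_inj; apply: val_inj.
exact: E.
Qed.

Lemma pr_ext_extension : extension_profile pr pr_ext.
Proof.
move=> s; split; first exact/key_total_order/priority_key_inj.
move=> x y pr_xy; apply: priority_key_lt.
have := first_reach_mono pr_xy; rewrite leq_eqVlt.
by case/orP => ->; rewrite ?card_above_lt ?orbT.
Qed.

(* Every matching of the chain stays fair for pr_ext: an envied student
   reaches s no later than k, the envious one strictly later. *)
Lemma pr_ext_fair k : fair P pr_ext (mu k).
Proof.
move=> [s [j [i [mu_j not_at_s envy ext_ij]]]].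
have reach_j : first_reach s j <= k.
  by apply: first_reach_le; apply/existsP; exists j; rewrite eqxx mu_j eqxx.
have : pr_ext s j i.
  by apply: priority_key_lt; rewrite (leq_ltn_trans reach_j)
                                     ?first_reach_after_envy.
by rewrite /pr_ext ltnNge ltnW.
Qed.

End ExtendPriorities.

Theorem theorem1 (I S : finType) (P : I -> rel (option S)) (q : S -> nat)
    (pr : S -> rel I) :
  2 < #|I| ->
  (forall i, total_order (P i)) ->
  (forall s, 0 < q s) ->
  (forall s, partial_order (pr s)) ->
  forall (K : nat) (mu : 'I_K -> I -> option S),
    0 < K ->
    (forall k, stable P q pr (mu k)) ->
    (forall k k' : 'I_K, k < k' -> pareto_dominates P (mu k') (mu k)) ->
    exists pr' : S -> rel I,
      extension_profile pr pr' /\ forall k, stable P q pr' (mu k).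
Proof.
(* Only fairness changes with the priorities; the chain is weakly
   improving because it is Pareto improving. *)
move=> _ P_total _ pr_po K mu _ mu_stable mu_pareto.
have P_po i : partial_order (P i) by case: (P_total i) => -[].
have mu_fair k : fair P pr (mu k) by case: (mu_stable k).
have mu_improving (k k' : 'I_K) : k' < k -> forall i, R P i (mu k i) (mu k' i).
  by move=> lt_k'k; case: (mu_pareto _ _ lt_k'k).
exists (pr_ext pr mu); split; first exact: pr_ext_extension.
move=> k; case: (mu_stable k) => matching ir nw _; split=> //.
exact: pr_ext_fair.
Qed.
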